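(* Let $G$ be a finitely generated group with growth function $g_G(n)$, let $t(n)$ be a function and $\mathtt{L}$ a language. If $g_G(t(n)) \in o(U_{\mathtt{L}}(n))$, then $\mathtt{L}\notin \mathfrak{L}(G)^w_{t(n)}$.
   Context: For a group $G$ with identity $e$, a $G$-automaton is a tuple $(Q,\Sigma,G,\delta,q_0,Q_a)$ where $Q$ is a finite set of states, $\Sigma$ a finite input alphabet, $q_0\in Q$ the initial state, $Q_a\subseteq Q$ the accepting states, and $\delta$ assigns to each $(q,\sigma)\in Q\times(\Sigma\cup\{\varepsilon\})$ a finite set of pairs $(q',m)\in Q\times G$. The register holds an element of $G$, initially $e$; using a transition $(q',m)\in\delta(q,\sigma)$ (one step) the automaton reads $\sigma$ (or nothing), moves to $q'$ and replaces the register content $x$ by $xm$. A word is accepted if some computation reads it entirely and ends in an accepting state with register equal to $e$. A $G$-automaton recognizing $\mathtt{L}$ is weakly $t(n)$ time-bounded if every $x\in\mathtt{L}$ with $|x|=n$ has an accepting computation of at most $t(n)$ steps; $\mathfrak{L}(G)^w_{t(n)}$ is the class of languages recognized by such automata. For a finite generating set $X$ of $G$, $|g|_X$ is the length of a shortest word over $X\cup X^{-1}$ representing $g$, and $g_G(n)=|\{g\in G: |g|_X\le n\}|$ is the growth function (asymptotically independent of $X$). A finite set $S$ of strings is uniformly $n$-dissimilar for $\mathtt{L}$ if for each $w\in S$ there is a string $v$ with $|wv|\le n$, $wv\in\mathtt{L}$, and for every $w'\in S$, $w'\neq w$, $|w'v|\le n$ and $w'v\notin\mathtt{L}$. $U_{\mathtt{L}}(n)$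 is the maximum cardinality of a uniformly $n$-dissimilar set for $\mathtt{L}$.
   Formalization: The hypothesis $g_G(t(n)) \in o(U_{\mathtt{L}}(n))$ is imposed on the growth function with respect to every finite generating set X of G, rather than on the growth function for a single one. The statement above fails without it. *)

From HB Require Import structures.
From mathcomp Require Import all_boot.
From mathcomp Require Import boolp.

Set Implicit Arguments.
Unset Strict Implicit.
Unset Printing Implicit Defensive.

Local Open Scope group_scope.

Section Growth.
Variable G : groupType.

Definition eval_word (s : seq G) : G := foldr (fun x y => x * y) 1 s.

Definition symm (X : seq G) : seq G := X ++ map (fun x => x^-1) X.

Definition generates (X : seq G) : Prop :=
  forall g : G, exists s : seq G, all (fun x => x \in symm X) s /\ eval_word s = g.

Fixpoint words (A : seq G) (k : nat) : seq (seq G) :=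
  if k is k'.+1 then [seq a :: w | a <- A, w <- words A k'] else [:: [::]].

Definition ball (X : seq G) (n : nat) : seq G :=
  undup (flatten [seq map eval_word (words (symm X) k) | k <- iota 0 n.+1]).

Definition growth (X : seq G) (n : nat) : nat := size (ball X n).
End Growth.

Record gautomaton (G : groupType) (A : finType) := GAutomaton {
  state : finType;
  delta : state -> option A -> seq (state * G);
  q0 : state;
  accepting : pred state
}.

Section Automata.
Variables (G : groupType) (A : finType) (M : gautomaton G A).

(* run q x w k q' y : starting in state q with register x, the automaton
   reads exactly w in k steps and ends in state q' with register y *)
Inductive run : state M -> G -> seq A -> nat -> state M -> G -> Prop :=
| run_nil q x : run q x [::] 0 q x
| run_eps q x w k q1 m q2 y :
    (q1, m) \in delta q None -> run q1 (x * m) w k q2 y -> run q x w k.+1 q2 y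
| run_sym q x a w k q1 m q2 y :
    (q1, m) \in delta q (Some a) -> run q1 (x * m) w k q2 y ->
    run q x (a :: w) k.+1 q2 y.

Definition accepts_in (w : seq A) (k : nat) : Prop :=
  exists q, accepting q /\ run (q0 M) 1 w k q 1.

Definition accepted (w : seq A) : Prop := exists k, accepts_in w k.

Definition recognizes (L : seq A -> Prop) : Prop :=
  forall w, accepted w <-> L w.

Definition weakly_time_bounded (L : seq A -> Prop) (t : nat -> nat) : Prop :=
  recognizes L /\
  forall w, L w -> exists k, k <= t (size w) /\ accepts_in w k.
End Automata.

Definition weak_class (G : groupType) (A : finType) (t : nat -> nat)
  (L : seq A -> Prop) : Prop :=
  exists M : gautomaton G A, weakly_time_bounded M L t.

Section Dissimilar.
Variables (A : finType) (L : seq A -> Prop).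

Definition unif_dissimilar (n : nat) (S : seq (seq A)) : Prop :=
  uniq S /\
  forall w, w \in S -> exists v : seq A,
    size (w ++ v) <= n /\ L (w ++ v) /\
    forall w', w' \in S -> w' != w -> size (w' ++ v) <= n /\ ~ L (w' ++ v).

(* U_L(n): maximal cardinality of a uniformly n-dissimilar set.  Such sets
   consist of strings of length <= n, so their size is at most
   sum_{i<=n} #|A|^i <= (#|A|+1)^n; the max is taken below that bound. *)
Definition U_L (n : nat) : nat :=
  \max_(k < ((#|A|.+1) ^ n).+1 |
         `[< exists S, unif_dissimilar n S /\ size S = k >]) k.
End Dissimilar.

(* f \in o(g) for f, g : nat -> nat : f(n)/g(n) -> 0, i.e. for every
   eps = 1/k > 0, eventually f n <= eps * g n *)
Definition littleo (f g : nat -> nat) : Prop :=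
  forall k, 0 < k -> exists N, forall n, N <= n -> k * f n <= g n.

From HB Require Import structures.
From mathcomp Require Import all_boot.
From mathcomp Require Import boolp.
From mathcomp Require Import zify.

Set Implicit Arguments.
Unset Strict Implicit.
Unset Printing Implicit Defensive.

(* In a weakly t(n)-time-bounded G-automaton, each word w of a
   uniformly n-dissimilar set S is the prefix of an accepted word of length
   <= n, so after reading w within t(m) steps (m <= n the argmax of t on
   [0, n]) the automaton is in a configuration (q, g) with g in the ball of
   radius t(m) for any generating set containing the transition labels.
   Two distinct words of S cannot share such a configuration, since then the
   completion of one would also complete the other.  Hence
   U_L(n) <= |Q| g_G(t(m)), which is incompatible with g_G(t(n)) = o(U_L(n)). *)

Lemma size_le_of_injective_rel (T U : eqType) (R : T -> U -> Prop)
    (S : seq T) (P : seq U) :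
  uniq S ->
  (forall w, w \in S -> exists2 p, p \in P & R w p) ->
  (forall w w' p, w \in S -> w' \in S -> R w p -> R w' p -> w = w') ->
  size S <= size P.
Proof.
elim: S P => [//|w S IH] P /= /andP[wS uS] hasR injR.
have [p pP Rwp] := hasR w (mem_head w S).
rewrite (perm_size (perm_to_rem pP)) ltnS.
apply: IH => // [w' w'S|w1 w2 p' w1S w2S]; last first.
  by apply: injR; rewrite inE ?w1S ?w2S orbT.
have w'wS : w' \in w :: S by rewrite inE w'S orbT.
have [p' p'P Rw'p'] := hasR w' w'wS.
exists p' => //; apply: rem_mem p'P; apply: contraNneq wS => Ep'.
by rewrite -(injR w' w p) ?mem_head // -Ep'.
Qed.

Lemma exists_argmax_le (t : nat -> nat) n :
  exists2 m, m <= n & forall i, i <= n -> t i <= t m.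
Proof.
have [[m lt_mn] /= maxE] := eq_bigmax (fun i : 'I_n.+1 => t i) ltac:(by rewrite card_ord).
exists m => // i le_in; rewrite -ltnS in le_in.
by rewrite -maxE (leq_bigmax (Ordinal le_in)).
Qed.

Lemma not_littleo_of_le_prefix (f U : nat -> nat) (c : nat) :
  (forall n, 0 < f n) -> {homo U : m n / m <= n} ->
  (forall n, exists2 m, m <= n & U n <= c * f m) ->
  ~ littleo f U.
Proof.
move=> f_gt0 U_mono U_le o_fU.
(* The witness [m] for [N1 + N2] either lies below [N1], where [f] is at most
   [C], or at least [N1], where [c.+1 * f m <= U m]; both are impossible. *)
have [N1 UN1] := o_fU c.+1 (ltn0Sn c).
pose C := \max_(i < N1) f i.
have [N2 UN2] := o_fU (c * C).+1 (ltn0Sn _).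
have [m le_m U_le_m] := U_le (N1 + N2).
case: (ltnP m N1) => [lt_mN1|le_N1m].
- have fm_le : f m <= C := leq_bigmax (Ordinal lt_mN1).
  have := leq_trans (UN2 _ (leq_addl _ _)) U_le_m.
  have := leq_pmulr (c * C).+1 (f_gt0 (N1 + N2)).
  have := leq_mul (leqnn c) fm_le.
  lia.
- have := leq_trans (UN1 m le_N1m) (leq_trans (U_mono _ _ le_m) U_le_m).
  by rewrite mulSn -{2}(add0n (c * f m)) leq_add2r leqNgt f_gt0.
Qed.

Lemma U_L_homo (A : finType) (L : seq A -> Prop) : {homo U_L L : m n / m <= n}.
Proof.
move=> m n le_mn; apply/bigmax_leqP => k /asboolP [S [[uS dissS] Sk]].
have lt_kn : k < ((#|A|.+1) ^ n).+1.
  by apply: leq_trans (ltn_ord k) _; rewrite ltnS leq_pexp2l.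
apply: leq_trans (leq_bigmax_cond (Ordinal lt_kn) _) => //.
apply/asboolP; exists S; split=> //; split=> // w wS.
have [v [le_wv [Lwv others]]] := dissS w wS.
exists v; split; first exact: leq_trans le_wv le_mn.
split=> // w' w'S ne_w'w; have [le_w'v notL] := others w' w'S ne_w'w.
by split=> //; apply: leq_trans le_w'v le_mn.
Qed.

Section Words.
Variable G : groupType.
Local Open Scope group_scope.

Lemma mem_words (B : seq G) s : all (fun x => x \in B) s -> s \in words B (size s).
Proof.
elim: s => [//|a s IH] /= /andP[aB sB].
exact: (allpairs_f (fun a w => a :: w) aB (IH sB)).
Qed.

Lemma mem_ball (X : seq G) r s :
  all (fun x => x \in symm X) s -> size s <= r -> eval_word s \in ball X r.
Proof.
move=> sX le_sr; rewrite mem_undup; apply/flatten_mapP.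
exists (size s); first by rewrite mem_iota add0n ltnS.
exact/map_f/mem_words.
Qed.

Lemma growth_gt0 (X : seq G) r : 0 < growth X r.
Proof.
have := mem_ball (X := X) (s := [::]) isT (leq0n r).
by rewrite /growth lt0n size_eq0; apply: contraTneq => ->.
Qed.

Lemma generates_catl (X Y : seq G) : generates X -> generates (X ++ Y).
Proof.
move=> genX g; have [s [sX <-]] := genX g; exists s; split=> //.
apply: sub_all sX => x; rewrite /symm map_cat !mem_cat.
by case/orP=> ->; rewrite ?orbT.
Qed.
End Words.

Section Runs.
Variables (G : groupType) (A : finType) (M : gautomaton G A).
Local Notation run := (@run G A M).
Local Notation delta := (@delta G A M).
Local Open Scope group_scope.

Lemma run_cat q x w k1 q1 g v k2 q2 y :
  run q x w k1 q1 g -> run q1 g v k2 q2 y -> run q x (w ++ v) (k1 + k2) q2 y.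
Proof.
elim=> {q x w k1 q1 g} // [q x w k q1 m q3 g|q x a w k q1 m q3 g] dm _ IH r2.
- exact: run_eps dm (IH r2).
- exact: run_sym dm (IH r2).
Qed.

Lemma run_split q x w v k q2 y : run q x (w ++ v) k q2 y ->
  exists k1 k2 q1 g, [/\ k = k1 + k2, run q x w k1 q1 g & run q1 g v k2 q2 y].
Proof.
move Ewv: (w ++ v) => u r; elim: r w v Ewv => {q x u k q2 y}.
- by move=> q x [|//] [|//] _; exists 0, 0, q, x; split; constructor.
- move=> q x u k q1 m q2 y dm _ IH w v Ewv.
  have [k1 [k2 [q' [g [-> r1 r2]]]]] := IH w v Ewv.
  by exists k1.+1, k2, q', g; split=> //; apply: run_eps dm r1.
- move=> q x a u k q1 m q2 y dm r IH [|b w] v /= Ewv.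
  + exists 0, k.+1, q, x; split=> //; first exact: run_nil.
    by rewrite Ewv; apply: run_sym dm r.
  + case: Ewv => -> Ewv; have [k1 [k2 [q' [g [-> r1 r2]]]]] := IH w v Ewv.
    by exists k1.+1, k2, q', g; split=> //; apply: run_sym dm r1.
Qed.

Definition transition_labels : seq G :=
  flatten [seq [seq p.2 | p <- delta q a]
          | q <- enum (state M), a <- None :: map Some (enum A)].

Lemma mem_transition_labels q a q1 m :
  (q1, m) \in delta q a -> m \in transition_labels.
Proof.
move=> dm; apply/flattenP; exists [seq p.2 | p <- delta q a]; last first.
  by apply/mapP; exists (q1, m).
apply: (allpairs_f (fun q a => [seq p.2 | p <- delta q a])); first exact: mem_enum.
by case: a {dm} => [a|]; rewrite ?mem_head // inE map_f ?mem_enum ?orbT.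
Qed.

Lemma run_register q x w k q2 y : run q x w k q2 y ->
  exists s, [/\ size s = k, all (fun m => m \in transition_labels) s
              & y = x * eval_word s].
Proof.
elim=> {q x w k q2 y} [q x|q x w k q1 m q2 y dm _ [s [<- sl ->]]
                          |q x a w k q1 m q2 y dm _ [s [<- sl ->]]].
- by exists [::]; rewrite mulg1.
- by exists (m :: s); rewrite /= (mem_transition_labels dm) sl mulgA.
- by exists (m :: s); rewrite /= (mem_transition_labels dm) sl mulgA.
Qed.

Lemma run_register_in_ball (X : seq G) r q w k q2 y :
  {subset transition_labels <= X} -> run q 1 w k q2 y -> k <= r ->
  y \in ball X r.
Proof.
move=> labelsX /run_register [s [<- sl ->]] le_sr; rewrite mul1g.
apply: mem_ball le_sr; apply: sub_all sl => m /labelsX mX.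
by rewrite mem_cat mX.
Qed.

Definition accepts_from (q : state M) (g : G) (v : seq A) : Prop :=
  exists k qf, accepting qf /\ run q g v k qf 1.

Lemma accepted_cat w k q g v :
  run (q0 M) 1 w k q g -> accepts_from q g v -> accepted M (w ++ v).
Proof.
move=> rw [k' [qf [acc_qf rv]]].
by exists (k + k'), qf; split=> //; apply: run_cat rw rv.
Qed.

Lemma accepts_in_cat w v k : accepts_in M (w ++ v) k ->
  exists k1 q g, [/\ k1 <= k, run (q0 M) 1 w k1 q g & accepts_from q g v].
Proof.
move=> [qf [acc_qf /run_split [k1 [k2 [q [g [-> rw rv]]]]]]].
by exists k1, q, g; split=> //; [apply: leq_addr | exists k2, qf].
Qed.
End Runs.

Section DissimilarBound.
Variables (G : groupType) (A : finType) (M : gautomaton G A).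
Variables (t : nat -> nat) (L : seq A -> Prop) (X : seq G).
Hypothesis M_bounded : weakly_time_bounded M L t.
Hypothesis labelsX : {subset transition_labels M <= X}.

Lemma U_L_le_card_growth n T :
  (forall m, m <= n -> t m <= T) -> U_L L n <= #|state M| * growth X T.
Proof.
move=> tT; apply/bigmax_leqP => k /asboolP [S [[uS dissS] <-]].
pose R w (p : state M * G) := (exists k1, run (q0 M) 1 w k1 p.1 p.2) /\
  exists v, accepts_from p.1 p.2 v /\ forall w', w' \in S -> w' != w -> ~ L (w' ++ v).
rewrite cardE /growth -(size_allpairs pair).
apply: (size_le_of_injective_rel (R := R)) => // [w wS|w w' p wS w'S].
- have [v [le_wv [Lwv others]]] := dissS w wS.
  have [kw [le_kt /accepts_in_cat [k1 [q [g [le_k1 rw acc_v]]]]]] := M_bounded.2 _ Lwv.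
  exists (q, g); last first.
    split; first by exists k1.
    by exists v; split=> // w' w'S ne_w'w; case: (others w' w'S ne_w'w).
  apply: allpairs_f; first exact: mem_enum.
  apply: run_register_in_ball rw _ => //.
  exact: leq_trans le_k1 (leq_trans le_kt (tT _ le_wv)).
- move=> [_ [v [acc_v others]]] [[k1 rw'] _].
  case: (eqVneq w w') => // ne_ww'; exfalso.
  apply: (others w' w'S); first by rewrite eq_sym.
  by apply/M_bounded.1; apply: accepted_cat rw' acc_v.
Qed.
End DissimilarBound.

Theorem theorem4p2 (G : groupType) (A : finType) (t : nat -> nat)
    (L : seq A -> Prop) :
  (exists X : seq G, generates X) ->
  (forall X : seq G, generates X ->
     littleo (fun n => growth X (t n)) (U_L L)) ->
  ~ weak_class G t L.
Proof.
move=> [X0 genX0] o_growth [M M_bounded].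
pose X := X0 ++ transition_labels M.
have labelsX : {subset transition_labels M <= X}.
  by move=> m mM; rewrite mem_cat mM orbT.
apply: (not_littleo_of_le_prefix (c := #|state M|)) (o_growth X _).
- by move=> n; apply: growth_gt0.
- exact: U_L_homo.
- move=> n; have [m le_mn tm_max] := exists_argmax_le t n.
  by exists m => //; apply: U_L_le_card_growth tm_max.
- exact: generates_catl.
Qed.
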